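(* Let $L_5=\{-3,-2,-1,0,1\}$ with its natural linear order. Define the games $\star=\{-1\mid -3\}$, and for any game $G$: $\mathsf{M}(G)=\{1\mid G\}$, $\mathsf{P}(G)=\{G\mid -2\}$, $\mathsf{P}_\star(G)=\{G\mid \star\}$. For $n\in\mathbb{N}$ let $\mathsf{P}_n(G)=\mathsf{P}(G)$ if $n$ is odd and $\mathsf{P}_n(G)=\mathsf{P}_\star(G)$ if $n$ is even. Define $G_0=0$ (the atomic game $[0]$) and $G_{n+1}=\mathsf{M}(\mathsf{P}_n(G_n))$. Then for every $n\ge 0$, $0\le G_n$.
   Context: Games over a poset $A$ of atoms are defined inductively: for each $a\in A$, $[a]$ is a game (atomic; often written simply $a$); whenever $L,R$ are non-empty sets of games, $\{L\mid R\}$ is a game (composite), with left options the elements of $L$ and right options the elements of $R$; $\{G_1,\dots,G_n\mid H_1,\dots,H_m\}$ denotes $\{\{G_1,\dots,G_n\}\mid\{H_1,\dots,H_m\}\}$. Relations $\le$ and $\lhd$ on games are defined by mutual recursion: $G\le H$ iff (1) every left option $G^L$ of $G$ satisfies $G^L\lhd H$, (2) every right option $H^R$ of $H$ satisfies $G\lhd H^R$, and (3) if $G$ or $H$ is atomic then $G\lhd H$. $G\lhd H$ iff (1) some right option $G^R$ of $G$ satisfies $G^R\le H$, or (2) some left option $H^L$ of $H$ satisfies $G\le H^L$, or (3) $G=[a]$, $H=[b]$ are atomic with $a\le b$ in $A$. *)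

From Stdlib Require Import List ZArith.
Import ListNotations.
Open Scope Z_scope.

(* A composite game {L | R} has a NON-EMPTY list of left options
   (lhead :: ltail) and a NON-EMPTY list of right options (rhead :: rtail).
   Finite option lists suffice for every game in the statement. *)
Inductive game (A : Type) : Type :=
| Atom : A -> game A
| Comp : game A -> list (game A) -> game A -> list (game A) -> game A.
Arguments Atom {A} _.
Arguments Comp {A} _ _ _ _.

Definition mk {A} (l0 : game A) (L : list (game A)) (r0 : game A) (R : list (game A)) :=
  Comp l0 L r0 R.

Definition left_opts {A} (G : game A) : list (game A) :=
  match G with Atom _ => [] | Comp l0 L _ _ => l0 :: L end.
Definition right_opts {A} (G : game A) : list (game A) :=
  match G with Atom _ => [] | Comp _ _ r0 R => r0 :: R end.
Definition is_atomic {A} (G : game A) : Prop :=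
  match G with Atom _ => True | Comp _ _ _ _ => False end.

(* The relations <= and <| defined by mutual recursion; since every clause
   refers only to strictly smaller pairs (or, in clause (3) of <=, to <| of the
   same pair, which in turn only refers to smaller pairs or atoms), the
   inductive (least-fixpoint) definition coincides with the recursive one. *)
Inductive gle {A : Type} (leA : A -> A -> Prop) : game A -> game A -> Prop :=
| gle_intro : forall G H : game A,
    (forall GL, In GL (left_opts G) -> glf leA GL H) ->
    (forall HR, In HR (right_opts H) -> glf leA G HR) ->
    (is_atomic G \/ is_atomic H -> glf leA G H) ->
    gle leA G H
with glf {A : Type} (leA : A -> A -> Prop) : game A -> game A -> Prop :=
| glf_right : forall G H GR, In GR (right_opts G) -> gle leA GR H -> glf leA G H
| glf_left  : forall G H HL, In HL (left_opts H) -> gle leA G HL -> glf leA G H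
| glf_atom  : forall a b, leA a b -> glf leA (Atom a) (Atom b).

Inductive L5 : Type := m3 | m2 | m1 | z0 | p1.
Definition L5_val (x : L5) : Z :=
  match x with m3 => -3 | m2 => -2 | m1 => -1 | z0 => 0 | p1 => 1 end.
Definition L5_le (x y : L5) : Prop := L5_val x <= L5_val y.

Definition g5 := game L5.
Definition le5 : g5 -> g5 -> Prop := gle L5_le.

Definition star : g5 := Comp (Atom m1) [] (Atom m3) [].
Definition Mg (G : g5) : g5 := Comp (Atom p1) [] G [].
Definition Pg (G : g5) : g5 := Comp G [] (Atom m2) [].
Definition Pstar (G : g5) : g5 := Comp G [] star [].
Definition Pn (n : nat) (G : g5) : g5 := if Nat.odd n then Pg G else Pstar G.

Fixpoint Gseq (n : nat) : g5 :=
  match n with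
  | O => Atom z0
  | S k => Mg (Pn k (Gseq k))
  end.

From Stdlib Require Import List ZArith Lia.
Import ListNotations.

(* Since [0] is atomic with no options, 0 <= {1 | P} needs
   only 0 <| P and 0 <| {1 | P}; the latter is witnessed by the left option 1.
   For P = P_n(G_n) the former is witnessed by the left option G_n, using the
   induction hypothesis 0 <= G_n; the right options -2 and star never matter. *)

Section AtomicLeft.

Variables (A : Type) (leA : A -> A -> Prop).

Lemma gle_Atom (a b : A) : leA a b -> gle leA (Atom a) (Atom b).
Proof.
  intros Hab. constructor; simpl; try tauto.
  intros _. now apply glf_atom.
Qed.

Lemma glf_Comp_left (G l0 : game A) (L : list (game A)) (r0 : game A)
    (R : list (game A)) :
  gle leA G l0 -> glf leA G (Comp l0 L r0 R).
Proof.
  intros Hle. apply glf_left with (HL := l0); simpl; auto.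
Qed.

Lemma gle_Atom_Comp (a : A) (l0 : game A) (L : list (game A)) (r0 : game A)
    (R : list (game A)) :
  gle leA (Atom a) l0 ->
  (forall HR, In HR (r0 :: R) -> glf leA (Atom a) HR) ->
  gle leA (Atom a) (Comp l0 L r0 R).
Proof.
  intros Hl Hr. constructor; simpl; try tauto.
  intros _. now apply glf_Comp_left.
Qed.

End AtomicLeft.

Lemma zero_lf_Pn (k : nat) (G : g5) :
  le5 (Atom z0) G -> glf L5_le (Atom z0) (Pn k G).
Proof.
  intros HG. unfold Pn. destruct (Nat.odd k); now apply glf_Comp_left.
Qed.

Lemma zero_le_Mg (G : g5) : glf L5_le (Atom z0) G -> le5 (Atom z0) (Mg G).
Proof.
  intros HG. apply gle_Atom_Comp.
  - apply gle_Atom. unfold L5_le; simpl; lia.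
  - simpl. intros HR [<- | []]. exact HG.
Qed.

Theorem corollary3p3 : forall n : nat, le5 (Atom z0) (Gseq n).
Proof.
  induction n as [|k IH]; simpl.
  - apply gle_Atom. unfold L5_le; simpl; lia.
  - apply zero_le_Mg, zero_lf_Pn, IH.
Qed.
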